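(* Fix a step $h$ and write $\widehat{\Theta}_0:=\widehat{\Theta}_0^\top(h)=\frac1K\sum_{t=1}^T\Psi_{t}^\top Y_{t}e_t^\top\in\mathbb{R}^{d\times T}$ and $\sigma^\star_{\min}:=\sigma^\star_{\min}(h)$. There is an absolute constant $c>0$ such that for every $\delta_0>0$, with probability at least $1-\exp\!\big[(T+d)-c\,\epsilon_3^2\delta_0^2K\frac{\zeta^4}{d^2}\sigma^{\star2}_{\min}\big]$ with $\epsilon_3=0.1$, $$\big\|\widehat{\Theta}_0-\mathbb{E}[\widehat{\Theta}_0]\big\|\le 0.1\,\delta_0\frac{\zeta^2}{d}\sigma^\star_{\min},$$ where $\|\cdot\|$ is the spectral norm.
   Context: Setting: $T$ tasks, each a finite-horizon episodic MDP with common finite state space, finite action space, horizon $H$, common transitions, and deterministic rewards $R_{ht}(s,a)=\langle\theta^\star_{ht},\psi(s,a)\rangle\in[0,1]$, with $\psi:\mathcal S\times\mathcal A\to\mathbb{R}^d$, $\|\psi(s,a)\|\le1$, $\|\theta^\star_{ht}\|\le\sqrt d$. $\Theta^\star_h\in\mathbb{R}^{T\times d}$ has $t$-th row $\theta^{\star\top}_{ht}$, rank $r\le\frac12\min(T,d)$, and $\sigma^\star_{\min}(h)$ is its smallest nonzero singular value. For each task $t$ and $k=1,\dots,K$ one episode is run under a fixed exploration policy; at step $h$ one records $\psi_{tk}=\psi(s_h,a_h)$ and $y_{tk}=\langle\theta^\star_{ht},\psi_{tk}\rangle$. $Y_t=[y_{t1},\dots,y_{tK}]^\top$, $\Psi_t\in\mathbb{R}^{K\times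 d}$ has rows $\psi_{tk}^\top$, $e_t\in\mathbb{R}^T$ standard basis vector. The exploration policy is such that the $\psi_{tk}$ are i.i.d. with $\|\psi_{tk}\|\le1$ a.s. and there exist $\zeta,\xi>0$ with $\mathbb{E}|\langle\psi_{tk},x\rangle|\ge\zeta/\sqrt d$ and $\mathbb{E}[\psi_{tk}\psi_{tk}^\top]\preceq\frac{1}{d\xi^2}I$ for all unit $x\in\mathbb{R}^d$. *)

From HB Require Import structures.
From mathcomp Require Import all_boot all_order all_algebra.
From mathcomp Require Import boolp classical_sets reals.
From mathcomp Require Import sequences exp.
Set Implicit Arguments. Unset Strict Implicit. Unset Printing Implicit Defensive.
Import Order.TTheory GRing.Theory Num.Theory.
Local Open Scope ring_scope.
Local Open Scope classical_set_scope.

Section Defs.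
Variable R : realType.

Definition enorm m n (v : 'M[R]_(m, n)) : R :=
  Num.sqrt (\sum_(i < m) \sum_(j < n) v i j ^+ 2).

Definition dotr n (u v : 'rV[R]_n) : R := \sum_(j < n) u 0 j * v 0 j.

Definition specnorm m n (A : 'M[R]_(m, n)) : R :=
  sup [set enorm (A *m x) | x in [set x : 'cV[R]_n | enorm x <= 1]].

(* Smallest nonzero singular value: the nonzero singular values of A are the
   s > 0 such that s^2 is an eigenvalue of A^T A. *)
Definition sigma_min_nz m n (A : 'M[R]_(m, n)) : R :=
  inf [set s : R | 0 < s /\ eigenvalue (A^T *m A) (s ^+ 2)].

Definition loewner_le n (A B : 'M[R]_n) : Prop :=
  forall x : 'cV[R]_n, (x^T *m A *m x) 0 0 <= (x^T *m B *m x) 0 0.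

(* A sample omega records, for every task t and episode k, the state-action
   pair (s_h, a_h) visited at step h.  The pairs are i.i.d. with law p, so the
   probability of omega is the product of p over all (t,k). *)
Variables (S A : finType) (T d K : nat).
Variable (psi : S * A -> 'rV[R]_d).
Variable (Theta : 'M[R]_(T, d)).      (* Theta*_h, t-th row = theta*_{ht}^T *)
Variable (p : {ffun S * A -> R}).     (* law of (s_h, a_h) under exploration *)

Definition sample := {ffun 'I_T * 'I_K -> S * A}.

Definition prob (w : sample) : R := \prod_(tk : 'I_T * 'I_K) p (w tk).

Definition Prob (E : pred sample) : R := \sum_(w : sample | E w) prob w.

Definition Expect_mx m n (F : sample -> 'M[R]_(m, n)) : 'M[R]_(m, n) :=
  \sum_(w : sample) prob w *: F w.

Definition psi_tk (w : sample) (t : 'I_T) (k : 'I_K) : 'rV[R]_d := psi (w (t, k)).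

Definition Psi_t (w : sample) (t : 'I_T) : 'M[R]_(K, d) :=
  \matrix_(k < K, j < d) psi_tk w t k 0 j.

Definition Y_t (w : sample) (t : 'I_T) : 'cV[R]_K :=
  \col_(k < K) dotr (row t Theta) (psi_tk w t k).

Definition e_vec (t : 'I_T) : 'cV[R]_T := delta_mx t 0.

Definition Theta_hat0 (w : sample) : 'M[R]_(d, T) :=
  (K%:R)^-1 *: \sum_(t < T) ((Psi_t w t)^T *m Y_t w t *m (e_vec t)^T).

Definition E_abs_dot (x : 'rV[R]_d) : R :=
  \sum_(sa : S * A) p sa * `|dotr (psi sa) x|.

Definition E_outer : 'M[R]_d :=
  \sum_(sa : S * A) p sa *: ((psi sa)^T *m psi sa).

End Defs.

From HB Require Import structures.
From mathcomp Require Import all_boot all_order all_algebra.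
From mathcomp Require Import boolp classical_sets reals.
From mathcomp Require Import sequences exp.
From mathcomp Require Import ring lra.
Import Order.TTheory GRing.Theory Num.Theory.
Set Implicit Arguments. Unset Strict Implicit. Unset Printing Implicit Defensive.
Local Open Scope ring_scope.

(* The spectral norm is at most the Frobenius norm, whose square is
   K^-2 sum_t |S_t|^2 where S_t = sum_k z_t(s_k, a_k) adds K i.i.d. centred
   vectors z_t = y psi - E[y psi] of norm at most 2.  The second-order bound
   exp y <= 1 + y + 2 y^2 (y <= 1/2) gives
   E exp(a |v + z|^2) <= exp((a + 8 a^2 B^2) |v|^2 + a B^2); iterating over
   the K episodes yields E exp(|S_t|^2 / (64 K)) <= e^(1/8).  Independence
   across tasks and Chernoff's bound give
   P(|Theta_hat0 - E Theta_hat0| > u) <= exp(T/8 - K u^2/64), which is the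
   claim with c = 1/64 since u = 0.1 delta0 zeta^2 sigma / d. *)

Section RealInequalities.
Variable R : realType.

Lemma sum_mul_sqr_le (I : finType) (a b : I -> R) :
  (\sum_i a i * b i) ^+ 2 <= (\sum_i a i ^+ 2) * (\sum_i b i ^+ 2).
Proof.
set Sa := \sum_i a i ^+ 2; set Sb := \sum_i b i ^+ 2; set Sab := \sum_i a i * b i.
have Sa_ge0 : 0 <= Sa by apply: sumr_ge0 => i _; exact: sqr_ge0.
have Sb_ge0 : 0 <= Sb by apply: sumr_ge0 => i _; exact: sqr_ge0.
(* Lagrange: the residual of b after projecting on a has square norm Sa (Sa Sb - Sab^2). *)
have residual : \sum_i (Sa * b i - Sab * a i) ^+ 2 = Sa * (Sa * Sb - Sab ^+ 2).
  rewrite (eq_bigr (fun i => Sa ^+ 2 * b i ^+ 2 - 2 * Sa * Sab * (a i * b i)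
                             + Sab ^+ 2 * a i ^+ 2)); last by move=> i _; ring.
  rewrite big_split sumrB /= -!mulr_sumr -/Sa -/Sb -/Sab; ring.
have : 0 <= \sum_i (Sa * b i - Sab * a i) ^+ 2 by apply: sumr_ge0 => i _; exact: sqr_ge0.
rewrite residual; have [Sa0 _|Sa_gt0] := eqVneq Sa 0.
  have a0 i : a i = 0.
    apply/eqP; rewrite -sqrf_eq0 eq_le sqr_ge0 andbT -Sa0 /Sa (bigD1 i) //= lerDl.
    by apply: sumr_ge0 => j _; exact: sqr_ge0.
  by rewrite /Sab big1 ?expr0n ?mulr_ge0 // => i _; rewrite a0 mul0r.
by rewrite pmulr_rge0 ?subr_ge0 // lt_def Sa_gt0.
Qed.

Lemma expR_le_quadratic (y : R) : y <= 1 / 2 -> expR y <= 1 + y + 2 * y ^+ 2.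
Proof.
move=> y_le; have y1_gt0 : 0 < 1 - y by lra.
have : (1 - y) * (1 + y + 2 * y ^+ 2) >= 1.
  have : 0 <= y ^+ 2 * (1 - 2 * y) by apply: mulr_ge0; [exact: sqr_ge0 | lra].
  have -> : (1 - y) * (1 + y + 2 * y ^+ 2) = 1 + y ^+ 2 * (1 - 2 * y) by ring.
  lra.
rewrite -ler_pdivrMl // => /(le_trans _); apply.
rewrite -[expR y]invrK -expRN mulr1 lef_pV2 ?posrE ?expR_gt0 //.
by rewrite -[1 - y]/(1 + - y) expR_ge1Dx.
Qed.

Lemma chernoff_le (I : finType) (q X : I -> R) (P : pred I) (a c : R) :
  (forall i, 0 <= q i) -> 0 <= a -> (forall i, P i -> c <= X i) ->
  \sum_(i | P i) q i <= expR (- (a * c)) * \sum_i q i * expR (a * X i).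
Proof.
move=> q_ge0 a_ge0 PX; rewrite mulr_sumr.
apply: le_trans (_ : \sum_(i | P i) expR (- (a * c)) * (q i * expR (a * X i)) <= _).
  apply: ler_sum => i Pi; rewrite mulrCA -expRD -[X in X <= _]mulr1.
  apply: ler_wpM2l => //; rewrite -expR0 ler_expR addrC subr_ge0.
  exact: ler_wpM2l (PX i Pi).
rewrite [X in _ <= X](bigID P) /= lerDl; apply: sumr_ge0 => i _.
by rewrite !mulr_ge0 ?expR_ge0.
Qed.

End RealInequalities.

Section SquaredNorm.
Variables (R : realType) (n : nat).
Implicit Types u v : 'rV[R]_n.

Definition sqnorm v : R := \sum_j v 0 j ^+ 2.

Lemma sqnorm_ge0 v : 0 <= sqnorm v.
Proof. by apply: sumr_ge0 => j _; exact: sqr_ge0. Qed.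

Lemma sqnorm0 : sqnorm 0 = 0.
Proof. by rewrite /sqnorm big1 // => j _; rewrite mxE expr0n. Qed.

Lemma sqnormN v : sqnorm (- v) = sqnorm v.
Proof. by apply: eq_bigr => j _; rewrite mxE sqrrN. Qed.

Lemma sqnormZ (c : R) v : sqnorm (c *: v) = c ^+ 2 * sqnorm v.
Proof. by rewrite /sqnorm mulr_sumr; apply: eq_bigr => j _; rewrite mxE exprMn. Qed.

Lemma enorm_row v : enorm v = Num.sqrt (sqnorm v).
Proof. by rewrite /enorm big_ord1. Qed.

Lemma sqnormD u v : sqnorm (u + v) = sqnorm u + 2 * dotr u v + sqnorm v.
Proof.
rewrite /sqnorm /dotr mulr_sumr -!big_split /=.
by apply: eq_bigr => j _; rewrite mxE; ring.
Qed.

Lemma dotr_sumr (I : finType) (c : I -> R) u (v : I -> 'rV[R]_n) :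
  dotr u (\sum_i c i *: v i) = \sum_i c i * dotr u (v i).
Proof.
rewrite /dotr (eq_bigr (fun j => \sum_i c i * (u 0 j * v i 0 j))).
  by rewrite exchange_big /=; apply: eq_bigr => i _; rewrite mulr_sumr.
by move=> j _; rewrite summxE mulr_sumr; apply: eq_bigr => i _; rewrite mxE; ring.
Qed.

Lemma dotr_sqr_le u v : dotr u v ^+ 2 <= sqnorm u * sqnorm v.
Proof. exact: sum_mul_sqr_le. Qed.

Lemma sqnormD_le u v (B C : R) : 0 <= B -> 0 <= C ->
  sqnorm u <= B ^+ 2 -> sqnorm v <= C ^+ 2 -> sqnorm (u + v) <= (B + C) ^+ 2.
Proof.
move=> B_ge0 C_ge0 uB vC; rewrite sqnormD.
have uv_le : dotr u v ^+ 2 <= (B * C) ^+ 2.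
  rewrite exprMn; apply: le_trans (dotr_sqr_le u v) _.
  by apply: ler_pM; rewrite ?sqnorm_ge0.
have BC_ge0 : 0 <= B * C by exact: mulr_ge0.
have : dotr u v <= B * C by nra.
nra.
Qed.

Lemma sqnorm_sum_le m (v : 'I_m -> 'rV[R]_n) (B : R) : 0 <= B ->
  (forall k, sqnorm (v k) <= B ^+ 2) -> sqnorm (\sum_k v k) <= (m%:R * B) ^+ 2.
Proof.
move=> B_ge0; elim: m v => [|m IHm] v vB.
  by rewrite big_ord0 sqnorm0 mul0r expr0n.
rewrite big_ord_recr /= -natr1 mulrDl mul1r.
apply: sqnormD_le => //; first by rewrite mulr_ge0 ?ler0n.
exact: IHm.
Qed.

Lemma sqnorm_convex_le1 (I : finType) (c : I -> R) (v : I -> 'rV[R]_n) :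
  (forall i, 0 <= c i) -> \sum_i c i = 1 -> (forall i, sqnorm (v i) <= 1) ->
  sqnorm (\sum_i c i *: v i) <= 1.
Proof.
move=> c_ge0 c_sum1 v_le1; set w := \sum_i c i *: v i.
have w_ge0 := sqnorm_ge0 w.
have w_dotr : sqnorm w = \sum_i c i * dotr w (v i).
  by rewrite -dotr_sumr /sqnorm /dotr; apply: eq_bigr => j _; rewrite expr2.
(* 2 <w, v> <= <w, v>^2 + 1 <= |w|^2 + 1, so |w|^2 <= (|w|^2 + 1) / 2. *)
have dotr_le i : dotr w (v i) <= (sqnorm w + 1) / 2.
  have : dotr w (v i) ^+ 2 <= sqnorm w.
    apply: le_trans (dotr_sqr_le _ _) _; rewrite -[X in _ <= X]mulr1.
    exact: ler_wpM2l.
  have := sqr_ge0 (dotr w (v i) - 1); nra.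
have : sqnorm w <= (sqnorm w + 1) / 2.
  rewrite {1}w_dotr; apply: le_trans (ler_sum _ (fun i _ => ler_wpM2l (c_ge0 i) (dotr_le i))) _.
  by rewrite -mulr_suml c_sum1 mul1r.
lra.
Qed.

End SquaredNorm.

Section MatrixNorms.
Variable R : realType.

Lemma specnorm_le_enorm m n (M : 'M[R]_(m, n)) : specnorm M <= enorm M.
Proof.
apply: ge_sup.
  exists (enorm (M *m (0 : 'cV[R]_n))), 0 => //=.
  by rewrite /= /enorm big1 ?sqrtr0 ?ler01 // => i _; rewrite big1 // => j _; rewrite !mxE expr0n.
move=> _ [x x_le1 <-]; rewrite /enorm ler_wsqrtr //.
have x_sum_le1 : \sum_k x k 0 ^+ 2 <= 1.
  have : enorm x <= Num.sqrt 1 by rewrite sqrtr1.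
  by rewrite /enorm ler_sqrt //; under eq_bigr do rewrite big_ord1.
apply: ler_sum => i _; rewrite big_ord1 mxE.
apply: le_trans (sum_mul_sqr_le _ _) _; rewrite -[X in _ <= X]mulr1.
by apply: ler_wpM2l => //; apply: sumr_ge0 => j _; exact: sqr_ge0.
Qed.

Lemma sigma_min_nz_ge0 m n (M : 'M[R]_(m, n)) : 0 <= sigma_min_nz M.
Proof.
rewrite /sigma_min_nz; set E := (X in inf X).
have [[s Es]|E0] := pselect (E !=set0)%classic.
  by apply: lb_le_inf; [exists s | move=> r [r_gt0 _]; exact: ltW].
suff -> : E = set0 by rewrite inf0.
by apply/seteqP; split=> s // Es; apply: E0; exists s.
Qed.

End MatrixNorms.

Section FfunCons.
Variable J : finType.

Definition fcons n (x : J) (g : {ffun 'I_n -> J}) : {ffun 'I_n.+1 -> J} :=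
  [ffun i => if unlift ord0 i is Some j then g j else x].

Lemma fcons0 n x (g : {ffun 'I_n -> J}) : fcons x g ord0 = x.
Proof. by rewrite ffunE unlift_none. Qed.

Lemma fconsS n x (g : {ffun 'I_n -> J}) j : fcons x g (lift ord0 j) = g j.
Proof. by rewrite ffunE liftK. Qed.

Lemma big_fcons (T : Type) (idx : T) (op : T -> T -> T) (F : J -> T)
    n x (g : {ffun 'I_n -> J}) :
  \big[op/idx]_k F (fcons x g k) = op (F x) (\big[op/idx]_k F (g k)).
Proof. by rewrite big_ord_recl fcons0; congr op; apply: eq_bigr => k _; rewrite fconsS. Qed.

Lemma sum_ffunS (R : nmodType) n (F : {ffun 'I_n.+1 -> J} -> R) :
  \sum_f F f = \sum_x \sum_(g : {ffun 'I_n -> J}) F (fcons x g).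
Proof.
rewrite pair_bigA /= (reindex (fun q : J * {ffun 'I_n -> J} => fcons q.1 q.2)) //.
apply: onW_bij; exists (fun f : {ffun 'I_n.+1 -> J} => (f ord0, [ffun j => f (lift ord0 j)])).
- by case=> x g /=; rewrite fcons0; congr pair; apply/ffunP => j; rewrite ffunE fconsS.
- move=> f /=; apply/ffunP => i; rewrite ffunE.
  by case: unliftP => [j ->|->] //; rewrite ffunE.
Qed.

End FfunCons.

Section ProductLaw.
Variables (R : realType) (J : finType) (p : J -> R).

Lemma sum_ffun_prod_curry (I1 I2 : finType) (G : I1 -> {ffun I2 -> J} -> R) :
  \sum_(w : {ffun I1 * I2 -> J}) (\prod_i p (w i)) * \prod_t G t [ffun k => w (t, k)]
  = \prod_t \sum_(f : {ffun I2 -> J}) (\prod_k p (f k)) * G t f.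
Proof.
rewrite bigA_distr_bigA /=.
rewrite (reindex (fun W : {ffun I1 -> {ffun I2 -> J}} => [ffun tk => W tk.1 tk.2])) /=.
  apply: eq_bigr => W _; rewrite big_split /=; congr (_ * _).
    by rewrite (pair_bigA _ (fun t k => p (W t k))); apply: eq_bigr => -[t k] _; rewrite ffunE.
  by apply: eq_bigr => t _; congr (G t _); apply/ffunP => k; rewrite !ffunE.
apply: onW_bij; exists (fun w : {ffun I1 * I2 -> J} => [ffun t => [ffun k => w (t, k)]]).
  by move=> W; apply/ffunP => t; apply/ffunP => k; rewrite !ffunE.
by move=> w; apply/ffunP => -[t k]; rewrite !ffunE.
Qed.

Hypothesis p_sum1 : \sum_x p x = 1.

Lemma sum_ffun_prod1 (I : finType) : \sum_(w : {ffun I -> J}) \prod_i p (w i) = 1.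
Proof. by rewrite -(bigA_distr_bigA (fun (_ : I) => p)) big1 // => i _; rewrite p_sum1. Qed.

Lemma sum_ffun_prod_marginal (I : finType) (i0 : I) (h : J -> R) :
  \sum_(w : {ffun I -> J}) (\prod_i p (w i)) * h (w i0) = \sum_x p x * h x.
Proof.
pose F i x := p x * (if i == i0 then h x else 1).
have prodF : \prod_i \sum_x F i x = \sum_x p x * h x.
  rewrite (bigD1 i0) //= [X in _ * X]big1 ?mulr1.
    by apply: eq_bigr => x _; rewrite /F eqxx.
  by move=> i /negbTE i_ne; under eq_bigr do rewrite /F i_ne mulr1.
rewrite -prodF bigA_distr_bigA; apply: eq_bigr => w _.
rewrite /F big_split /=; congr (_ * _).
by rewrite (bigD1 i0) //= eqxx big1 ?mulr1 // => i /negbTE ->.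
Qed.

End ProductLaw.

Section CenteredWalk.
Variables (R : realType) (J : finType) (p : J -> R) (n : nat) (z : J -> 'rV[R]_n) (B : R).
Hypotheses (p_ge0 : forall x, 0 <= p x) (p_sum1 : \sum_x p x = 1).
Hypotheses (B_ge0 : 0 <= B) (z_le : forall x, sqnorm (z x) <= B ^+ 2).
Hypothesis z_mean0 : \sum_x p x *: z x = 0.

Lemma expR_sqnormD_mean_le (v : 'rV[R]_n) (a c : R) :
  0 <= a -> sqnorm v <= c -> 16 * a ^+ 2 * B ^+ 2 * c <= 1 ->
  \sum_x p x * expR (a * sqnorm (v + z x))
    <= expR ((a + 8 * a ^+ 2 * B ^+ 2) * sqnorm v + a * B ^+ 2).
Proof.
move=> a_ge0 v_le avc; have v_ge0 := sqnorm_ge0 v.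
pose y x := 2 * a * dotr v (z x).
have y_sqr_le x : y x ^+ 2 <= 4 * a ^+ 2 * B ^+ 2 * sqnorm v.
  have vz_le : sqnorm v * sqnorm (z x) <= sqnorm v * B ^+ 2 by exact: ler_wpM2l.
  have := dotr_sqr_le v (z x); rewrite /y; nra.
have y_le x : y x <= 1 / 2.
  have : y x ^+ 2 <= 1 / 4.
    apply: le_trans (y_sqr_le x) _.
    have : 4 * a ^+ 2 * B ^+ 2 * sqnorm v <= 4 * a ^+ 2 * B ^+ 2 * c.
      by apply: ler_wpM2l => //; rewrite !mulr_ge0 ?sqr_ge0.
    lra.
  nra.
have term_le x : p x * expR (a * sqnorm (v + z x))
    <= expR (a * sqnorm v + a * B ^+ 2) * (p x * (1 + y x + 2 * y x ^+ 2)).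
  rewrite mulrCA; apply: ler_wpM2l => //.
  rewrite sqnormD (_ : a * _ = a * sqnorm v + y x + a * sqnorm (z x)); last by rewrite /y; ring.
  rewrite !expRD -!mulrA; apply: ler_wpM2l; first exact: expR_ge0.
  rewrite mulrC; apply: ler_pM; rewrite ?expR_ge0 ?expR_le_quadratic //.
  by rewrite ler_expR; apply: ler_wpM2l.
have y_mean0 : \sum_x p x * y x = 0.
  rewrite (eq_bigr (fun x => 2 * a * (p x * dotr v (z x)))); last by move=> x _; rewrite /y; ring.
  by rewrite -mulr_sumr -dotr_sumr z_mean0 /dotr big1 ?mulr0 // => j _; rewrite mxE mulr0.
have y_sqr_mean_le : \sum_x p x * y x ^+ 2 <= 4 * a ^+ 2 * B ^+ 2 * sqnorm v.
  apply: le_trans (ler_sum _ (fun x _ => ler_wpM2l (p_ge0 x) (y_sqr_le x))) _.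
  by rewrite -mulr_suml p_sum1 mul1r.
apply: le_trans (ler_sum _ (fun x _ => term_le x)) _.
rewrite -mulr_sumr (_ : (a + _) * _ + _
  = (a * sqnorm v + a * B ^+ 2) + 8 * a ^+ 2 * B ^+ 2 * sqnorm v); last by ring.
rewrite [X in _ <= X]expRD; apply: ler_wpM2l; first exact: expR_ge0.
apply: le_trans (expR_ge1Dx _).
rewrite (eq_bigr (fun x => p x + p x * y x + 2 * (p x * y x ^+ 2))); last by move=> x _; ring.
rewrite !big_split /= -mulr_sumr p_sum1 y_mean0; lra.
Qed.

Lemma expR_sqnorm_walk_le m (a : R) : 0 <= a -> 16 * a * B ^+ 2 * m%:R <= 1 ->
  \sum_(f : {ffun 'I_m -> J}) (\prod_k p (f k)) * expR (a * sqnorm (\sum_k z (f k)))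
    <= expR (2 * a * B ^+ 2 * m%:R).
Proof.
elim: m a => [|m IHm] a a_ge0 am_le.
  under eq_bigr do rewrite [in sqnorm _]big_ord0 sqnorm0 mulr0 expR0 mulr1.
  by rewrite sum_ffun_prod1 // mulr0 expR0.
(* Peel off the first episode and apply the one-step bound given the others. *)
rewrite sum_ffunS.
under eq_bigr do under eq_bigr do rewrite (big_fcons _ _ p) (big_fcons _ _ z) addrC mulrAC mulrC.
rewrite exchange_big /=.
have m_ge0 : 0 <= m%:R :> R by exact: ler0n.
have s_ge0 : 0 <= a * B ^+ 2 by rewrite mulr_ge0 ?sqr_ge0.
rewrite -[m.+1%:R]natr1 in am_le *.
have t_ge0 : 0 <= a * B ^+ 2 * m%:R by exact: mulr_ge0.
have t_le : 16 * (a * B ^+ 2 * m%:R) <= 1 by lra.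
set a' := a + 8 * a ^+ 2 * B ^+ 2.
apply: le_trans (_ : \sum_(g : {ffun 'I_m -> J}) (\prod_k p (g k))
   * expR (a' * sqnorm (\sum_k z (g k)) + a * B ^+ 2) <= _).
  apply: ler_sum => g _; rewrite -mulr_sumr; apply: ler_wpM2l.
    by apply: prodr_ge0 => k _.
  apply: (expR_sqnormD_mean_le (c := (m%:R * B) ^+ 2)) => //; first exact: sqnorm_sum_le.
  rewrite (_ : 16 * _ * _ * _ = 16 * (a * B ^+ 2 * m%:R) ^+ 2); [nra | ring].
under eq_bigr do rewrite expRD mulrA.
rewrite -mulr_suml.
have a'_ge0 : 0 <= a' by rewrite addr_ge0 // mulr_ge0 // mulr_ge0 ?sqr_ge0.
have a'm_le : 16 * a' * B ^+ 2 * m%:R <= 1 by rewrite /a'; nra.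
apply: le_trans (ler_wpM2r (expR_ge0 _) (IHm a' a'_ge0 a'm_le)) _.
rewrite -expRD ler_expR /a'; nra.
Qed.

End CenteredWalk.

Section SampleModel.
Variables (R : realType) (S A : finType) (T d K : nat).
Variables (psi : S * A -> 'rV[R]_d) (Theta : 'M[R]_(T, d)) (p : {ffun S * A -> R}).
Hypotheses (p_ge0 : forall sa, 0 <= p sa) (p_sum1 : \sum_sa p sa = 1).

Definition reward_feature (t : 'I_T) sa : 'rV[R]_d := dotr (row t Theta) (psi sa) *: psi sa.
Definition mean_reward_feature t : 'rV[R]_d := \sum_sa p sa *: reward_feature t sa.
Definition centered_reward_feature t sa : 'rV[R]_d :=
  reward_feature t sa - mean_reward_feature t.
Definition centered_sum (w : sample S A T K) t : 'rV[R]_d :=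
  \sum_k centered_reward_feature t (w (t, k)).

Lemma Prob_compl (E : pred (sample S A T K)) :
  Prob p E = 1 - Prob p (fun w => ~~ E w).
Proof.
rewrite /Prob -(@sum_ffun_prod1 _ _ _ p_sum1 ('I_T * 'I_K)%type).
by rewrite [X in X - _](bigID E) /= addrK.
Qed.

Local Notation TH := (Theta_hat0 psi Theta (K:=K)).
Local Notation ETH := (Expect_mx p TH).

Lemma Theta_hat0E w j t : TH w j t = K%:R^-1 * (\sum_k reward_feature t (w (t, k))) 0 j.
Proof.
rewrite mxE !summxE (bigD1 t) //= big1 ?addr0 => [|i i_ne];
  rewrite mxE big_ord1 /e_vec trmx_delta [delta_mx _ _ _ _]mxE.
  rewrite !eqxx mulr1 mxE; congr (_ * _).
  by apply: eq_bigr => k _; rewrite !mxE mulrC.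
by rewrite (eq_sym t) (negbTE i_ne) andbF mulr0.
Qed.

Hypothesis K_gt0 : (0 < K)%N.

Lemma Expect_Theta_hat0E j t : ETH j t = mean_reward_feature t 0 j.
Proof.
rewrite summxE; under eq_bigr do rewrite mxE Theta_hat0E summxE mulr_sumr mulr_sumr.
rewrite exchange_big /= (eq_bigr (fun=> K%:R^-1 * mean_reward_feature t 0 j)).
  by rewrite sumr_const card_ord -[_ *+ K]mulr_natr mulrAC mulVf ?mul1r // pnatr_eq0 -lt0n.
move=> k _; under eq_bigr do rewrite mulrCA.
rewrite -mulr_sumr (sum_ffun_prod_marginal p_sum1 (t, k) (fun sa => reward_feature t sa 0 j)).
by rewrite summxE; congr (_ * _); apply: eq_bigr => sa _; rewrite [RHS]mxE.
Qed.

Lemma Theta_hat0_centeredE w j t :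
  (TH w - ETH) j t = K%:R^-1 * centered_sum w t 0 j.
Proof.
rewrite mxE [X in _ + X]mxE Theta_hat0E Expect_Theta_hat0E.
rewrite /centered_sum /centered_reward_feature sumrB [in RHS]mxE mulrDr.
rewrite [in RHS]mxE sumr_const card_ord -scaler_nat mxE mulrN mulrA.
by rewrite mulVf ?mul1r // pnatr_eq0 -lt0n.
Qed.

Lemma sqr_enorm_Theta_hat0_centered w :
  enorm (TH w - ETH) ^+ 2 = (\sum_t sqnorm (centered_sum w t)) / K%:R ^+ 2.
Proof.
rewrite sqr_sqrtr; last by apply: sumr_ge0 => j _; apply: sumr_ge0 => t _; exact: sqr_ge0.
under eq_bigr do under eq_bigr do rewrite Theta_hat0_centeredE exprMn.
rewrite exchange_big mulrC mulr_sumr; apply: eq_bigr => t _.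
by rewrite /sqnorm mulr_sumr exprVn.
Qed.

Lemma sum_sqnorm_centered_sum_ge w (u : R) : 0 <= u -> u < specnorm (TH w - ETH) ->
  K%:R ^+ 2 * u ^+ 2 <= \sum_t sqnorm (centered_sum w t).
Proof.
move=> u_ge0 /lt_le_trans/(_ (specnorm_le_enorm _)) u_lt.
have : u ^+ 2 <= enorm (TH w - ETH) ^+ 2 by rewrite ler_pXn2r ?nnegrE ?sqrtr_ge0 // ltW.
by rewrite sqr_enorm_Theta_hat0_centered ler_pdivlMr ?exprn_gt0 ?ltr0n // mulrC.
Qed.

Hypotheses (psi_le1 : forall sa, enorm (psi sa) <= 1)
  (reward01 : forall (t : 'I_T) sa, 0 <= dotr (row t Theta) (psi sa) <= 1).

Lemma sqnorm_reward_feature_le1 t sa : sqnorm (reward_feature t sa) <= 1.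
Proof.
have psi_sqnorm_le1 : sqnorm (psi sa) <= 1.
  have : Num.sqrt (sqnorm (psi sa)) <= Num.sqrt 1 by rewrite sqrtr1 -enorm_row.
  by rewrite ler_sqrt.
rewrite sqnormZ -[1]mulr1; apply: ler_pM; rewrite ?sqr_ge0 ?sqnorm_ge0 //.
by case/andP: (reward01 t sa) => r_ge0 r_le1; rewrite expr_le1.
Qed.

Lemma sqnorm_centered_reward_feature_le t sa :
  sqnorm (centered_reward_feature t sa) <= 2 ^+ 2.
Proof.
rewrite (_ : 2 = 1 + 1) //; apply: sqnormD_le; rewrite ?expr1n //.
  exact: sqnorm_reward_feature_le1.
by rewrite sqnormN; apply: sqnorm_convex_le1 => // sa'; exact: sqnorm_reward_feature_le1.
Qed.

Lemma centered_reward_feature_mean0 t :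
  \sum_sa p sa *: centered_reward_feature t sa = 0.
Proof.
under eq_bigr do rewrite scalerBr.
by rewrite sumrB -scaler_suml p_sum1 scale1r subrr.
Qed.

Lemma expR_sqnorm_centered_sum_le t :
  \sum_(f : {ffun 'I_K -> S * A}) (\prod_k p (f k))
     * expR ((64 * K%:R)^-1 * sqnorm (\sum_k centered_reward_feature t (f k)))
    <= expR (1 / 8).
Proof.
have K_neq0 : K%:R != 0 :> R by rewrite pnatr_eq0 -lt0n.
have a_ge0 : 0 <= (64 * K%:R)^-1 :> R by rewrite invr_ge0 mulr_ge0 ?ler0n.
rewrite (_ : 1 / 8 = 2 * (64 * K%:R)^-1 * 2 ^+ 2 * K%:R); last by field.
apply: expR_sqnorm_walk_le => //.
- exact: sqnorm_centered_reward_feature_le.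
- exact: centered_reward_feature_mean0.
- by rewrite (_ : 16 * _ * 2 ^+ 2 * K%:R = 1) //; field.
Qed.

Lemma Prob_Theta_hat0_dev_gt (u : R) : 0 <= u ->
  Prob p (fun w => ~~ (specnorm (TH w - ETH) <= u))
    <= expR (T%:R / 8 - K%:R * u ^+ 2 / 64).
Proof.
move=> u_ge0; set a : R := (64 * K%:R)^-1.
have a_ge0 : 0 <= a by rewrite invr_ge0 mulr_ge0 ?ler0n.
have dev_gt w : ~~ (specnorm (TH w - ETH) <= u) ->
    K%:R ^+ 2 * u ^+ 2 <= \sum_t sqnorm (centered_sum w t).
  by rewrite -ltNge; exact: sum_sqnorm_centered_sum_ge.
have prob_ge0 (w : sample S A T K) : 0 <= prob p w by apply: prodr_ge0.
rewrite /Prob; apply: le_trans (chernoff_le prob_ge0 a_ge0 dev_gt) _.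
pose G t (f : {ffun 'I_K -> S * A}) :=
  expR (a * sqnorm (\sum_k centered_reward_feature t (f k))).
(* The tasks use disjoint blocks of episodes, so the moment generating function factorises. *)
have prob_expR w : prob p w * expR (a * \sum_t sqnorm (centered_sum w t))
    = (\prod_i p (w i)) * \prod_t G t [ffun k => w (t, k)].
  rewrite mulr_sumr expR_sum; congr (_ * _); apply: eq_bigr => t _.
  by rewrite /G /centered_sum; under [in RHS]eq_bigr do rewrite ffunE.
under eq_bigr do rewrite prob_expR.
rewrite sum_ffun_prod_curry.
have walk_le t : 0 <= \sum_(f : {ffun 'I_K -> S * A}) (\prod_k p (f k)) * G t f <= expR (1 / 8).
  rewrite expR_sqnorm_centered_sum_le andbT.
  by apply: sumr_ge0 => f _; rewrite mulr_ge0 ?expR_ge0 //; apply: prodr_ge0.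
apply: le_trans (ler_wpM2l (expR_ge0 _) (ler_prod _ (fun t _ => walk_le t))) _.
rewrite prodr_const card_ord -expRM_natl -expRD ler_expR.
rewrite (_ : a * _ = K%:R * u ^+ 2 / 64); last by rewrite /a; field; rewrite pnatr_eq0 -lt0n.
lra.
Qed.

End SampleModel.

Theorem lemma1 (R : realType) :
  exists c : R, 0 < c /\
  forall (S A : finType) (T d K : nat)
         (psi : S * A -> 'rV[R]_d) (Theta : 'M[R]_(T, d))
         (p : {ffun S * A -> R}) (zeta xi : R),
    (0 < K)%N ->
    (* features *)
    (forall sa, enorm (psi sa) <= 1) ->
    (* deterministic rewards in [0,1] and parameter norms *)
    (forall (t : 'I_T) sa, 0 <= dotr (row t Theta) (psi sa) <= 1) ->
    (forall t : 'I_T, enorm (row t Theta) <= Num.sqrt (d%:R)) ->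
    (* low rank *)
    (0 < \rank Theta)%N ->
    (2 * \rank Theta <= minn T d)%N ->
    (* exploration law of (s_h, a_h) *)
    (forall sa, 0 <= p sa) -> \sum_sa p sa = 1 ->
    0 < zeta -> 0 < xi ->
    (forall x : 'rV[R]_d, enorm x = 1 ->
        zeta / Num.sqrt (d%:R) <= E_abs_dot psi p x) ->
    loewner_le (E_outer psi p) ((d%:R * xi ^+ 2)^-1 *: 1%:M) ->
    forall delta0 : R, 0 < delta0 ->
      let eps3 : R := 1 / 10 in
      let smin := sigma_min_nz Theta in
      let TH := Theta_hat0 psi Theta (K:=K) in
      let ETH := Expect_mx p (K:=K) TH in
      1 - expR ((T + d)%:R
                - c * eps3 ^+ 2 * delta0 ^+ 2 * K%:R
                  * (zeta ^+ 4 / (d%:R) ^+ 2) * smin ^+ 2)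
      <= Prob p (K:=K)
           (fun w => specnorm (TH w - ETH) <= 1 / 10 * delta0 * (zeta ^+ 2 / d%:R) * smin).
Proof.
exists (1 / 64); split; first by rewrite divr_gt0.
(* Only bounded features and rewards matter: the deviation bound holds for any
   radius. *)
move=> S A T d K psi Theta p zeta xi K_gt0 psi_le1 reward01 _ _ _ p_ge0 p_sum1 _ _ _ _.
move=> delta0 delta0_gt0; cbv zeta.
set smin := sigma_min_nz Theta; set u := 1 / 10 * delta0 * (zeta ^+ 2 / d%:R) * smin.
have u_ge0 : 0 <= u.
  have smin_ge0 : 0 <= smin := sigma_min_nz_ge0 Theta.
  by rewrite /u mulr_ge0 // mulr_ge0 ?divr_ge0 ?sqr_ge0 // mulr_ge0 ?divr_ge0 // ltW.
have exponent_le : T%:R / 8 - K%:R * u ^+ 2 / 64 <= (T + d)%:R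
    - 1 / 64 * (1 / 10) ^+ 2 * delta0 ^+ 2 * K%:R * (zeta ^+ 4 / d%:R ^+ 2) * smin ^+ 2.
  rewrite (_ : 1 / 64 * _ * _ * _ * _ * _ = K%:R * u ^+ 2 / 64); last first.
    by rewrite /u -exprVn; ring.
  by rewrite natrD; have := ler0n R T; have := ler0n R d; lra.
rewrite (Prob_compl p_sum1) lerD2l lerN2.
apply: le_trans (Prob_Theta_hat0_dev_gt p_ge0 p_sum1 K_gt0 psi_le1 reward01 u_ge0) _.
by rewrite ler_expR.
Qed.
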